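(* Let $k$ be an odd positive integer. Then $$\sum_{n=1}^{k}\frac{\cos^2(\pi n/k)}{\cos^4(2\pi n/k)}=\begin{cases}\dfrac{k}{12}\,(3+4k+3k^2+2k^3), & k\equiv 1 \pmod 4,\\[2mm] \dfrac{k}{12}\,(-3+4k-3k^2+2k^3), & k\equiv 3 \pmod 4.\end{cases}$$ *)

From Stdlib Require Export Reals Lra Lia.

From Stdlib Require Import ZArith.
Open Scope R_scope.

(* Fix an odd k, put θ_n = 2πn/k and consider the power sums
     S_m(r) = Σ_{n=1}^{k} cos(r θ_n) / cos(θ_n)^m      (0 <= r <= k).
   Since cos²(πn/k) = (1 + cos θ_n)/2, the theorem asks for (S_4(0) + S_3(0))/2.
   1. S_0(r) is k for r = 0 and 0 for 0 < r < k (a telescoping sine sum), and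
      S_m(k) = S_m(0) because cos(kθ_n) = 1.
   2. The product formula cos((r+2)θ) + cos(rθ) = 2 cos θ cos((r+1)θ) gives the
      recurrence S_{m+1}(r+2) + S_{m+1}(r) = 2 S_m(r+1).
   3. A sequence D on [0, k] with D(r+2) = -D(r), D(1) = 0 and D(k) = D(0)
      vanishes, since k is odd.  Hence S_m is determined by S_{m-1} and the
      two boundary values, so guessed closed forms of the shape
        cos(rπ/2) A_m(r) + sin(rπ/2) B_m(r)   (A_m, B_m polynomials)
      are verified order by order for m = 1, 2, 3, 4.
   4. Evaluating at r = 0 and using sin(kπ/2) = ±1 according to k mod 4 gives
      the two cases of the theorem. *)

Definition theta (k n : nat) : R := 2 * PI * INR n / INR k.

(* S_m(r) of the overview; the index i stands for n = i + 1. *)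
Definition power_sum (k m r : nat) : R :=
  sum_f_R0 (fun i => cos (INR r * theta k (S i)) / cos (theta k (S i)) ^ m) (pred k).

Definition quarter_wave (A B : R -> R) (r : nat) : R :=
  cos (INR r * PI / 2) * A (INR r) + sin (INR r * PI / 2) * B (INR r).

Lemma telescope (g : nat -> R) (N : nat) :
  sum_f_R0 (fun i => g (S i) - g i) N = g (S N) - g O.
Proof. induction N as [|N IH]; simpl; [ring | rewrite IH; ring]. Qed.

Lemma quarter_wave_S A B r : quarter_wave A B (S r) =
  - sin (INR r * PI / 2) * A (INR r + 1) + cos (INR r * PI / 2) * B (INR r + 1).
Proof.
  unfold quarter_wave. rewrite S_INR.
  replace ((INR r + 1) * PI / 2) with (INR r * PI / 2 + PI / 2) by field.
  rewrite cos_plus, sin_plus, cos_PI2, sin_PI2. ring.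
Qed.

Lemma quarter_wave_SS A B r : quarter_wave A B (S (S r)) =
  - (cos (INR r * PI / 2) * A (INR r + 2) + sin (INR r * PI / 2) * B (INR r + 2)).
Proof.
  unfold quarter_wave. rewrite !S_INR.
  replace ((INR r + 1 + 1) * PI / 2) with (INR r * PI / 2 + PI) by field.
  rewrite neg_cos, neg_sin. replace (INR r + 1 + 1) with (INR r + 2) by ring. ring.
Qed.

Lemma quarter_wave_0 A B : quarter_wave A B 0 = A 0.
Proof.
  unfold quarter_wave. simpl INR.
  replace (0 * PI / 2) with 0 by field. rewrite cos_0, sin_0. ring.
Qed.

Lemma quarter_wave_1 A B : quarter_wave A B 1 = B 1.
Proof.
  unfold quarter_wave. simpl INR.
  replace (1 * PI / 2) with (PI / 2) by field. rewrite cos_PI2, sin_PI2. ring.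
Qed.

Lemma odd_mod4 k : Nat.Odd k -> k = (4 * (k / 4) + k mod 4)%nat /\
  (k mod 4 = 1 \/ k mod 4 = 3)%nat.
Proof.
  intros [q ->]. split; [apply Nat.div_mod; lia|].
  pose proof (Nat.mod_upper_bound (2 * q + 1) 4 ltac:(lia)).
  pose proof (Nat.div_mod (2 * q + 1) 4 ltac:(lia)). lia.
Qed.

Lemma half_turns_odd k : Nat.Odd k -> cos (INR k * PI / 2) = 0 /\
  sin (INR k * PI / 2) = (if Nat.eqb (k mod 4) 1 then 1 else -1).
Proof.
  intros Hk. destruct (odd_mod4 k Hk) as [Hdiv [Hm | Hm]];
    rewrite Hm in Hdiv |- *; simpl Nat.eqb; rewrite Hdiv.
  - replace (INR (4 * (k / 4) + 1) * PI / 2) with (PI / 2 + 2 * INR (k / 4) * PI)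
      by (rewrite plus_INR, mult_INR; simpl; field).
    rewrite cos_period, sin_period, cos_PI2, sin_PI2. auto.
  - replace (INR (4 * (k / 4) + 3) * PI / 2) with ((PI / 2 + PI) + 2 * INR (k / 4) * PI)
      by (rewrite plus_INR, mult_INR; simpl; field).
    rewrite cos_period, sin_period, neg_cos, neg_sin, cos_PI2, sin_PI2. split; ring.
Qed.

Section PowerSums.

Variable k : nat.
Hypothesis Hk : Nat.Odd k.

Lemma k_pos : 0 < INR k.
Proof. destruct Hk as [q ->]. apply lt_0_INR. lia. Qed.

Lemma pred_k_succ : S (pred k) = k.
Proof. destruct Hk as [q ->]. lia. Qed.

(* No θ_n is an odd multiple of π/2: that would force 4n = (2z+1)k with
   an odd right-hand side. *)
Lemma cos_theta_neq0 n : cos (theta k n) <> 0.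
Proof.
  intros H0. pose proof k_pos as Kp. destruct Hk as [q Hq].
  apply cos_eq_0_0 in H0 as [z Hz]. unfold theta in Hz.
  assert (E : PI * (4 * INR n) = PI * ((2 * IZR z + 1) * INR k)).
  { assert (2 * PI * INR n = (IZR z * PI + PI / 2) * INR k) by (rewrite <- Hz; field; lra).
    lra. }
  apply Rmult_eq_reg_l in E; [|pose proof PI_RGT_0; lra].
  rewrite Hq, !INR_IZR_INZ in E.
  change 4 with (IZR 4) in E. change 2 with (IZR 2) in E. change 1 with (IZR 1) in E.
  rewrite <- !mult_IZR, <- !plus_IZR, <- mult_IZR in E.
  apply eq_IZR in E. rewrite Nat2Z.inj_add, Nat2Z.inj_mul in E.
  change (Z.of_nat 2) with 2%Z in E. change (Z.of_nat 1) with 1%Z in E.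
  assert (4 * Z.of_nat n = 2 * (2 * z * Z.of_nat q + z + Z.of_nat q) + 1)%Z
    by (rewrite E; ring).
  lia.
Qed.

Lemma power_sum_period m : power_sum k m k = power_sum k m 0.
Proof.
  unfold power_sum. apply sum_eq. intros i _. unfold theta.
  replace (INR k * (2 * PI * INR (S i) / INR k)) with (0 + 2 * INR (S i) * PI)
    by (pose proof k_pos; field; lra).
  rewrite cos_period, Rmult_0_l. reflexivity.
Qed.

Lemma power_sum0_at0 : power_sum k 0 0 = INR k.
Proof.
  rewrite <- pred_k_succ at 2. rewrite <- (Rmult_1_l (INR _)), <- sum_cte.
  unfold power_sum.
  apply sum_eq. intros i _. rewrite Rmult_0_l, cos_0. simpl. field.
Qed.

(* Σ_{n=1}^{k} cos(nx) = 0 for x = 2πr/k with 0 < r < k: multiplied by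
   2 sin(x/2) the sum telescopes to sin((k+1/2)x) - sin(x/2) = 0. *)
Lemma power_sum0_inner r : (0 < r < k)%nat -> power_sum k 0 r = 0.
Proof.
  intros Hr. pose proof k_pos as Kp. pose proof PI_RGT_0.
  set (x := 2 * PI * INR r / INR k).
  assert (Hsin : 0 < sin (x / 2)).
  { assert (0 < INR r < INR k) by (split; [apply lt_0_INR | apply lt_INR]; lia).
    apply sin_gt_0; unfold x.
    - apply Rmult_lt_0_compat; [|lra]. apply Rdiv_lt_0_compat; nra.
    - apply (Rmult_lt_reg_r (INR k)); [lra|].
      replace (2 * PI * INR r / INR k / 2 * INR k) with (PI * INR r) by (field; lra).
      nra. }
  set (g := fun j : nat => sin ((INR j + / 2) * x)).
  assert (Htele : 2 * sin (x / 2) * power_sum k 0 r = g (S (pred k)) - g O).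
  { rewrite <- telescope. unfold power_sum. rewrite scal_sum. apply sum_eq. intros i _.
    unfold g. rewrite !S_INR.
    replace (INR r * theta k (S i)) with ((INR i + 1) * x)
      by (unfold theta, x; rewrite S_INR; field; lra).
    replace ((INR i + 1 + / 2) * x) with ((INR i + 1) * x + x / 2) by field.
    replace ((INR i + / 2) * x) with ((INR i + 1) * x - x / 2) by field.
    rewrite sin_plus, sin_minus. simpl pow. field. }
  assert (Hend : g (S (pred k)) = g O).
  { unfold g. rewrite pred_k_succ.
    replace ((INR k + / 2) * x) with (x / 2 + 2 * INR r * PI) by (unfold x; field; lra).
    rewrite sin_period. simpl INR. f_equal. field. }
  rewrite Hend in Htele. apply (Rmult_eq_reg_l (2 * sin (x / 2))); lra.
Qed.

(* cos((r+2)θ) + cos(rθ) = 2 cos θ cos((r+1)θ), summed over n. *)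
Lemma power_sum_rec m r :
  power_sum k (S m) (S (S r)) + power_sum k (S m) r = 2 * power_sum k m (S r).
Proof.
  unfold power_sum. rewrite <- plus_sum, scal_sum. apply sum_eq. intros i _.
  set (t := theta k (S i)). pose proof (cos_theta_neq0 (S i)) as Hc.
  assert (cos t ^ m <> 0) by (apply pow_nonzero; auto).
  rewrite !S_INR.
  replace ((INR r + 1 + 1) * t) with ((INR r + 1) * t + t) by ring.
  replace (INR r * t) with ((INR r + 1) * t - t) by ring.
  rewrite cos_plus, cos_minus. simpl pow. field. auto.
Qed.

Lemma power_sum_at1 m : power_sum k (S m) 1 = power_sum k m 0.
Proof.
  unfold power_sum. apply sum_eq. intros i _. pose proof (cos_theta_neq0 (S i)).
  assert (cos (theta k (S i)) ^ m <> 0) by (apply pow_nonzero; auto).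
  simpl INR. rewrite Rmult_1_l, Rmult_0_l, cos_0. simpl pow. field. auto.
Qed.

(* A sequence with D(r+2) = -D(r), D(1) = 0 and D(k) = D(0) vanishes on [0, k]:
   the odd terms vanish from D(1), so D(0) = D(k) = 0 and the even terms too. *)
Lemma antiperiodic_vanish (D : nat -> R) :
  (forall r, (S (S r) <= k)%nat -> D (S (S r)) + D r = 0) ->
  D 1%nat = 0 -> D k = D O -> forall r, (r <= k)%nat -> D r = 0.
Proof.
  intros Hrec H1 Hper.
  assert (Hchain : forall j0, D j0 = 0 -> forall j, (j0 + 2 * j <= k)%nat -> D (j0 + 2 * j)%nat = 0).
  { intros j0 Hj0. induction j as [|j IH]; intros Hj; [now rewrite Nat.add_0_r|].
    replace (j0 + 2 * S j)%nat with (S (S (j0 + 2 * j))) by lia.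
    pose proof (Hrec (j0 + 2 * j)%nat ltac:(lia)). rewrite IH in * by lia. lra. }
  destruct Hk as [q Hq].
  assert (H0 : D O = 0) by (rewrite <- Hper, Hq, Nat.add_comm; apply Hchain; auto; lia).
  intros r Hr. destruct (Nat.Even_or_Odd r) as [[j ->] | [j ->]].
  - apply (Hchain 0%nat); auto.
  - rewrite Nat.add_comm. apply Hchain; auto; lia.
Qed.

Let s := sin (INR k * PI / 2).

Lemma power_sum_by_recurrence m (A B : R -> R) (P : nat -> R) :
  (forall r, (S (S r) <= k)%nat ->
     quarter_wave A B (S (S r)) + quarter_wave A B r = 2 * P (S r)) ->
  (forall r, (S (S r) <= k)%nat -> power_sum k m (S r) = P (S r)) ->
  B 1 = power_sum k m 0 -> s * B (INR k) = A 0 ->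
  forall r, (r <= k)%nat -> power_sum k (S m) r = quarter_wave A B r.
Proof.
  intros Hqw HP H1 Hper r Hr. apply Rminus_diag_uniq. revert r Hr.
  apply antiperiodic_vanish.
  - intros r Hr. pose proof (power_sum_rec m r). rewrite HP in * by lia.
    pose proof (Hqw r Hr). lra.
  - rewrite power_sum_at1, quarter_wave_1. lra.
  - destruct (half_turns_odd k Hk) as [Hc _].
    rewrite power_sum_period. unfold quarter_wave at 1. fold s. rewrite Hc, Hper, quarter_wave_0.
    ring.
Qed.

(* Passing from order m to m+1 when both closed forms are quarter waves: the
   recurrence becomes two difference equations for the polynomials. *)
Lemma raise_order m (A B A' B' : R -> R) :
  (forall r, (r <= k)%nat -> power_sum k m r = quarter_wave A' B' r) ->
  (forall x, A x - A (x + 2) = 2 * B' (x + 1)) ->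
  (forall x, B x - B (x + 2) = -2 * A' (x + 1)) ->
  B 1 = A' 0 -> s * B (INR k) = A 0 ->
  forall r, (r <= k)%nat -> power_sum k (S m) r = quarter_wave A B r.
Proof.
  intros Hprev HA HB H1 Hper.
  apply (power_sum_by_recurrence m A B (quarter_wave A' B')).
  - intros r _. rewrite quarter_wave_SS, quarter_wave_S. unfold quarter_wave.
    specialize (HA (INR r)). specialize (HB (INR r)). nra.
  - intros r Hr. apply Hprev. lia.
  - rewrite Hprev, quarter_wave_0 by lia. exact H1.
  - exact Hper.
Qed.

Lemma s_squared : s * s = 1.
Proof.
  unfold s. destruct (half_turns_odd k Hk) as [_ ->].
  destruct (Nat.eqb (k mod 4) 1); ring.
Qed.

Lemma power_sum_order1 r : (r <= k)%nat ->
  power_sum k 1 r = quarter_wave (fun _ => s * INR k) (fun _ => INR k) r.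
Proof.
  apply (power_sum_by_recurrence 0 _ _ (fun _ => 0)).
  - intros j _. rewrite quarter_wave_SS. unfold quarter_wave. ring.
  - intros j Hj. apply power_sum0_inner. lia.
  - symmetry. apply power_sum0_at0.
  - reflexivity.
Qed.

Lemma power_sum_order2 r : (r <= k)%nat ->
  power_sum k 2 r = quarter_wave (fun x => INR k ^ 2 - INR k * x) (fun x => s * INR k * x) r.
Proof.
  pose proof s_squared.
  apply (raise_order 1 _ _ _ _ power_sum_order1); intros; try ring.
  transitivity (s * s * INR k ^ 2); [ring | nra].
Qed.

Lemma power_sum_order3 r : (r <= k)%nat ->
  power_sum k 3 r = quarter_wave
    (fun x => s * (INR k ^ 3 + INR k) / 2 - s * INR k * x ^ 2 / 2)
    (fun x => INR k ^ 2 * x - INR k * x ^ 2 / 2 + INR k / 2) r.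
Proof.
  apply (raise_order 2 _ _ _ _ power_sum_order2); intros; field.
Qed.

Lemma power_sum_order4 r : (r <= k)%nat ->
  power_sum k 4 r = quarter_wave
    (fun x => (2 * INR k ^ 4 + 4 * INR k ^ 2) / 6 - INR k ^ 2 * x ^ 2 / 2
              + INR k * (x ^ 3 - x) / 6 - INR k * x / 2)
    (fun x => s * ((INR k ^ 3 + INR k) * x / 2 - INR k * (x ^ 3 - x) / 6)) r.
Proof.
  pose proof s_squared.
  apply (raise_order 3 _ _ _ _ power_sum_order3); intros; try field.
  transitivity (s * s * ((INR k ^ 3 + INR k) * INR k / 2 - INR k * (INR k ^ 3 - INR k) / 6));
    [ring | rewrite H; field].
Qed.

(* By the double-angle formula cos²(πn/k)/cos⁴θ_n = (1 + cos θ_n)/(2 cos⁴θ_n),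
   i.e. half the sum of the summands of S_4(0) and S_3(0). *)
Lemma target_sum_as_power_sums :
  sum_f 1 k (fun n => (cos (PI * INR n / INR k)) ^ 2 / (cos (2 * PI * INR n / INR k)) ^ 4)
  = / 2 * (power_sum k 4 0 + power_sum k 3 0).
Proof.
  unfold sum_f, power_sum. rewrite <- plus_sum, scal_sum.
  replace (k - 1)%nat with (pred k) by lia.
  apply sum_eq. intros i _. rewrite Nat.add_1_r.
  change (2 * PI * INR (S i) / INR k) with (theta k (S i)).
  pose proof (cos_theta_neq0 (S i)).
  assert (Hdouble : cos (theta k (S i)) = 2 * cos (PI * INR (S i) / INR k) * cos (PI * INR (S i) / INR k) - 1).
  { rewrite <- cos_2a_cos. unfold theta. f_equal. pose proof k_pos. field. lra. }
  replace (cos (PI * INR (S i) / INR k) ^ 2) with ((cos (theta k (S i)) + 1) / 2)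
    by (rewrite Hdouble; field).
  rewrite Rmult_0_l, cos_0. field. auto.
Qed.

End PowerSums.

Theorem mainTheorem1 (k : nat) (hk : Nat.Odd k) :
  sum_f 1 k (fun n => (cos (PI * INR n / INR k))^2 / (cos (2 * PI * INR n / INR k))^4) =
  (if Nat.eqb (k mod 4) 1
   then INR k / 12 * (3 + 4 * INR k + 3 * INR k ^ 2 + 2 * INR k ^ 3)
   else INR k / 12 * (-3 + 4 * INR k - 3 * INR k ^ 2 + 2 * INR k ^ 3)).
Proof.
  rewrite target_sum_as_power_sums by exact hk.
  rewrite power_sum_order4, power_sum_order3, !quarter_wave_0 by (auto; lia).
  destruct (half_turns_odd k hk) as [_ ->].
  destruct (Nat.eqb (k mod 4) 1); field.
Qed.
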